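(* Let $(G,\tau,\partial)$ be a Polish topometric group with the Steinhaus property, and let $H$ be a second countable topological group. If $\varphi\colon(G,\partial)\to H$ is a continuous group homomorphism, then $\varphi\colon(G,\tau)\to H$ is continuous.
   Context: A Polish topometric group is a triple $(G,\tau,\partial)$ with $(G,\tau)$ a Polish group, $\partial$ a bi-invariant metric whose topology refines $\tau$ and which is $\tau$-lower semi-continuous. For $A\subseteq G$, $(A)_\varepsilon=\{g\colon\partial(g,A)<\varepsilon\}$. A subset $A$ of $G$ is $\sigma$-syndetic if $G$ is covered by countably many left translates of $A$. The topometric group $G$ has the Steinhaus property if there is an integer $k$ such that for every symmetric $\sigma$-syndetic $A\subseteq G$ and every $\varepsilon>0$, $1_G\in\mathrm{Int}_\tau\big((A^k)_\varepsilon\big)$. *)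

From HB Require Import structures.
From mathcomp Require Import all_boot all_order all_algebra.
From mathcomp Require Import all_classical all_reals all_analysis.
Set Implicit Arguments. Unset Strict Implicit. Unset Printing Implicit Defensive.
Import Order.TTheory GRing.Theory Num.Theory.
Local Open Scope classical_set_scope.
Local Open Scope ring_scope.

Definition group_law (T : Type) (mul : T -> T -> T) (inv : T -> T) (one : T) : Prop :=
  [/\ (forall x y z, mul x (mul y z) = mul (mul x y) z),
      (forall x, mul one x = x), (forall x, mul x one = x),
      (forall x, mul (inv x) x = one) & (forall x, mul x (inv x) = one)].

Definition topological_group (T : topologicalType)
    (mul : T -> T -> T) (inv : T -> T) (one : T) : Prop :=
  [/\ group_law mul inv one,
      continuous (fun p : T * T => mul p.1 p.2) & continuous inv].

Definition is_metric (R : realType) (T : Type) (d : T -> T -> R) : Prop :=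
  [/\ (forall x y, 0 <= d x y), (forall x y, d x y = 0 <-> x = y),
      (forall x y, d x y = d y x) & (forall x y z, d x z <= d x y + d y z)].

Definition metric_open (R : realType) (T : Type) (d : T -> T -> R) (A : set T) : Prop :=
  forall x, A x -> exists2 e : R, 0 < e & [set y | d x y < e] `<=` A.

Definition metric_compatible (R : realType) (T : topologicalType) (d : T -> T -> R) : Prop :=
  forall A : set T, open A <-> metric_open d A.

Definition metric_complete (R : realType) (T : topologicalType) (d : T -> T -> R) : Prop :=
  forall u : nat -> T,
    (forall e : R, 0 < e -> exists N : nat, forall m n : nat,
        (N <= m)%N -> (N <= n)%N -> d (u m) (u n) < e) ->
    exists x : T, u @ \oo --> x.

Definition separable_space (T : topologicalType) : Prop :=
  exists S : set T, countable S /\ dense S.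

Definition polish_space (R : realType) (T : topologicalType) : Prop :=
  separable_space T /\
  exists d : T -> T -> R, [/\ is_metric d, metric_compatible d & metric_complete d].

Definition polish_group (R : realType) (T : topologicalType)
    (mul : T -> T -> T) (inv : T -> T) (one : T) : Prop :=
  topological_group mul inv one /\ polish_space R T.

(* ---------- Polish topometric groups (G, tau, dd); tau = topology of G ---------- *)
Definition polish_topometric_group (R : realType) (G : topologicalType)
    (mul : G -> G -> G) (inv : G -> G) (one : G) (dd : G -> G -> R) : Prop :=
  [/\ polish_group R mul inv one,
      is_metric dd,
      (forall g x y, dd (mul g x) (mul g y) = dd x y /\ dd (mul x g) (mul y g) = dd x y),
      (forall A : set G, open A -> metric_open dd A) &
      (forall r : R, closed [set p : G * G | dd p.1 p.2 <= r])].

Fixpoint set_pow (G : Type) (mul : G -> G -> G) (one : G) (A : set G) (k : nat) : set G :=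
  match k with
  | 0%N => [set one]
  | k'.+1 => [set z | exists a b, [/\ A a, set_pow mul one A k' b & z = mul a b]]
  end.

Definition symmetric_set (G : Type) (inv : G -> G) (A : set G) : Prop :=
  forall x, A x <-> A (inv x).

Definition sigma_syndetic (G : Type) (mul : G -> G -> G) (A : set G) : Prop :=
  exists g : nat -> G, forall x, exists n : nat, exists2 a, A a & x = mul (g n) a.

(* (A)_e = {g | dd(g, A) < e}, where dd(g, A) = inf_{a in A} dd(g, a) *)
Definition thickening (R : realType) (G : Type) (dd : G -> G -> R) (A : set G) (e : R) : set G :=
  [set g | exists2 a, A a & dd g a < e].

Definition steinhaus_property (R : realType) (G : topologicalType)
    (mul : G -> G -> G) (inv : G -> G) (one : G) (dd : G -> G -> R) : Prop :=
  exists k : nat, forall A : set G,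
    symmetric_set inv A -> sigma_syndetic mul A ->
    forall e : R, 0 < e -> interior (thickening dd (set_pow mul one A k) e) one.

Definition metric_continuous (R : realType) (G : Type) (H : topologicalType)
    (dd : G -> G -> R) (f : G -> H) : Prop :=
  forall U : set H, open U -> metric_open dd (f @^-1` U).

From HB Require Import structures.
From mathcomp Require Import all_boot all_order all_algebra.
From mathcomp Require Import all_classical all_reals all_analysis.
Local Open Scope classical_set_scope.
Local Open Scope ring_scope.

(* Take a symmetric open neighbourhood W of 1 in H with W^(k+1) inside a given
   neighbourhood V, and A := phi^-1(W).  Second countability of H makes A
   sigma-syndetic, and metric continuity puts a dd-ball B(1, e) inside A.  By the
   Steinhaus property (A^k)_e is a neighbourhood of 1; bi-invariance gives
   (A^k)_e <= B(1, e) A^k <= A^(k+1), whose image lies in W^(k+1) <= V.  So phi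
   is continuous at 1, hence everywhere by translation. *)

Lemma set_pow_subset {T : Type} {mul : T -> T -> T} {one : T} {A B : set T} {n : nat} :
  A `<=` B -> set_pow mul one A n `<=` set_pow mul one B n.
Proof.
move=> AB; elim: n => [|n IH] //= z [a [b [Aa Sb ->]]].
by exists a, b; split => //; [apply: AB | apply: IH].
Qed.

Section GroupHomomorphism.
Context {G H : Type} {mulG : G -> G -> G} {invG : G -> G} {oneG : G}.
Context {mulH : H -> H -> H} {invH : H -> H} {oneH : H} {phi : G -> H}.
Hypotheses (lawG : group_law mulG invG oneG) (lawH : group_law mulH invH oneH).
Hypothesis phiM : forall x y, phi (mulG x y) = mulH (phi x) (phi y).

Lemma hom_one : phi oneG = oneH.
Proof.
have [_ mul1G _ _ _] := lawG; have [mulHA mul1H _ mulVH _] := lawH.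
have e := phiM oneG oneG; rewrite mul1G in e.
by rewrite -(mulVH (phi oneG)) {3}e mulHA mulVH mul1H.
Qed.

Lemma hom_inv x : phi (invG x) = invH (phi x).
Proof.
have [_ _ _ mulVG _] := lawG; have [mulHA mul1H mulH1 _ mulHV] := lawH.
by rewrite -[LHS]mulH1 -(mulHV (phi x)) mulHA -phiM mulVG hom_one mul1H.
Qed.

Lemma hom_set_pow A n z :
  set_pow mulG oneG A n z -> set_pow mulH oneH (phi @` A) n (phi z).
Proof.
elim: n z => [|n IH] z /=; first by move=> ->; rewrite hom_one.
move=> [a [b [Aa Sb ->]]]; exists (phi a), (phi b); split => //.
- by exists a.
- exact: IH.
Qed.

End GroupHomomorphism.

Section TopologicalGroup.
Context {T : topologicalType} {mul : T -> T -> T} {inv : T -> T} {one : T}.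
Hypothesis tg : topological_group mul inv one.

Lemma nbhs_mull a x V : nbhs (mul a x) V -> nbhs x [set y | V (mul a y)].
Proof.
case: tg => _ cmul _ Vn.
have : (fun y => mul a y) @ x --> mul a x.
  apply: (@continuous2_cvg _ _ _ _ (nbhs x) _ (fun=> a) id mul a x).
  - exact: (cmul (a, x)).
  - exact: cvg_cst.
  - exact: cvg_id.
exact.
Qed.

Lemma nbhs_mulVl c V : nbhs (mul (inv c) c) V -> nbhs c [set y | V (mul (inv y) c)].
Proof.
case: tg => _ cmul cinv Vn.
have : (fun y => mul (inv y) c) @ c --> mul (inv c) c.
  apply: (@continuous2_cvg _ _ _ _ (nbhs c) _ inv (fun=> c) mul (inv c) c).
  - exact: (cmul (inv c, c)).
  - exact: cinv.
  - exact: cvg_cst.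
exact.
Qed.

Lemma nbhs_one_set_pow n V :
  nbhs one V -> exists2 U, nbhs one U & set_pow mul one U n `<=` V.
Proof.
case: tg => [[_ mul1 _ _ _] cmul _].
elim: n V => [|n IH] V Vn.
  by exists setT => [|z ->]; [exact: filterT | exact: nbhs_singleton].
have : nbhs (one, one) [set p | V (mul p.1 p.2)] by apply: cmul; rewrite /= mul1.
move=> [[A B] /= [An Bn] AB].
have [U Un UV] := IH (A `&` B) (filterI An Bn).
exists (A `&` B `&` U); first by apply: filterI => //; apply: filterI.
move=> _ /= [a [b [[[Aa _] _] Sb ->]]].
have [_ Bb] : (A `&` B) b by apply: UV; exact: set_pow_subset (@subIsetr _ _ _) _ Sb.
exact: (AB (a, b)).
Qed.

Lemma open_symmetric_subset U : nbhs one U ->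
  exists W, [/\ open W, W one, W `<=` U & symmetric_set inv W].
Proof.
case: tg => [[mulA mul1 mulg1 mulVg _] _ cinv] Un.
have inv1 : inv one = one by rewrite -[RHS](mulVg one) mulg1.
have invK x : inv (inv x) = x.
  by rewrite -[LHS]mulg1 -(mulVg x) mulA mulVg mul1.
exists (interior U `&` inv @^-1` interior U); split.
- by apply: openI; [exact: open_interior | apply: open_comp; last exact: open_interior].
- by split => /=; rewrite ?inv1; exact: Un.
- by move=> y [/interior_subset].
- move=> x; split => -[h1 h2]; split => //=; first by rewrite invK.
  by move: h2; rewrite /preimage /= invK.
Qed.

End TopologicalGroup.

Section HomomorphismIntoTopologicalGroup.
Context {G : choiceType} {mulG : G -> G -> G} {invG : G -> G} {oneG : G}.
Context {H : topologicalType} {mulH : H -> H -> H} {invH : H -> H} {oneH : H}.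
Context {phi : G -> H}.
Hypotheses (lawG : group_law mulG invG oneG) (tgH : topological_group mulH invH oneH).
Hypothesis phiM : forall x y, phi (mulG x y) = mulH (phi x) (phi y).

(* The translate g_n is chosen with phi g_n in the n-th basic open set, when
   that set meets the range of phi. *)
Lemma preimage_sigma_syndetic W : @second_countable H -> nbhs oneH W ->
  sigma_syndetic mulG (phi @^-1` W).
Proof.
move=> [B cB [_ Bnbhs]] Wn.
have [mulGA mul1G _ _ mulGV] := lawG; have [lawH _ _] := tgH.
have [_ _ _ mulVH _] := lawH.
have [f fI] := countable_injP _ cB.
pose P n (x : G) := exists b, [/\ B b, f b = n & b (phi x)].
exists (fun n => xget oneG (P n)) => x.
have : nbhs (phi x) [set y | W (mulH (invH y) (phi x))].
  by apply: (nbhs_mulVl tgH); rewrite mulVH.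
move=> /Bnbhs [b [Bb bx] bW].
have Pbx : P (f b) x by exists b.
have [b' [Bb' fb' b'g]] := xgetPex oneG (ex_intro _ x Pbx).
have b'b : b' = b by apply: fI => //; apply: mem_set.
subst b'.
exists (f b); exists (mulG (invG (xget oneG (P (f b)))) x).
  by rewrite /preimage /= phiM (hom_inv lawG lawH phiM); exact: bW.
by rewrite mulGA mulGV mul1G.
Qed.

End HomomorphismIntoTopologicalGroup.

Lemma hom_continuous_of_nbhs_one {G H : topologicalType}
    {mulG : G -> G -> G} {invG : G -> G} {oneG : G}
    {mulH : H -> H -> H} {invH : H -> H} {oneH : H} {phi : G -> H} :
  topological_group mulG invG oneG -> topological_group mulH invH oneH ->
  (forall x y, phi (mulG x y) = mulH (phi x) (phi y)) ->
  (forall V, nbhs oneH V -> nbhs oneG (phi @^-1` V)) -> continuous phi.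
Proof.
move=> tgG tgH phiM phi1 x V Vn.
have [lawG _ _] := tgG; have [lawH _ _] := tgH.
have [_ _ _ mulVG _] := lawG; have [mulHA mul1H mulH1 _ mulHV] := lawH.
have : nbhs (mulG (invG x) x) (phi @^-1` [set h | V (mulH (phi x) h)]).
  by rewrite mulVG; apply/phi1/(nbhs_mull tgH); rewrite mulH1.
move=> /(nbhs_mull tgG); apply: filterS => y.
by rewrite /preimage /= phiM (hom_inv lawG lawH phiM) mulHA mulHV mul1H.
Qed.

Lemma thickening_set_pow_subset {R : realType} {G : Type}
    {mul : G -> G -> G} {inv : G -> G} {one : G} {dd : G -> G -> R} {A k e} :
  group_law mul inv one -> (forall x y, dd x y = dd y x) ->
  (forall g x y, dd (mul x g) (mul y g) = dd x y) ->
  [set y | dd one y < e] `<=` A ->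
  thickening dd (set_pow mul one A k) e `<=` set_pow mul one A k.+1.
Proof.
move=> [mulA mul1 mulg1 mulVg _] dsym dinvr ballA z [a Sa dza].
exists (mul z (inv a)), a; split => //; last by rewrite -mulA mulVg mulg1.
by apply: ballA; rewrite /= dsym -(dinvr a) -mulA mulVg mulg1 mul1.
Qed.

Theorem proposition4p3 (R : realType) (G : topologicalType)
    (mulG : G -> G -> G) (invG : G -> G) (oneG : G) (dd : G -> G -> R)
    (H : topologicalType) (mulH : H -> H -> H) (invH : H -> H) (oneH : H)
    (phi : G -> H) :
  polish_topometric_group mulG invG oneG dd ->
  steinhaus_property mulG invG oneG dd ->
  topological_group mulH invH oneH ->
  @second_countable H ->
  (forall x y : G, phi (mulG x y) = mulH (phi x) (phi y)) ->
  metric_continuous dd phi ->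
  continuous phi.
Proof.
move=> [[tgG _] [_ _ dsym _] binv _ _] [k stein] tgH scH phiM phic.
have [lawG _ _] := tgG; have [lawH _ _] := tgH.
apply: (hom_continuous_of_nbhs_one tgG tgH phiM) => V Vn.
have [U Un UV] := nbhs_one_set_pow tgH k.+1 _ Vn.
have [W [oW W1 WU Wsym]] := open_symmetric_subset tgH _ Un.
have Asym : symmetric_set invG (phi @^-1` W).
  by move=> x; rewrite /preimage /= (hom_inv lawG lawH phiM); exact: Wsym.
have Asynd : sigma_syndetic mulG (phi @^-1` W).
  exact: preimage_sigma_syndetic lawG tgH phiM _ scH (open_nbhs_nbhs (conj oW W1)).
have A1 : (phi @^-1` W) oneG by rewrite /preimage /= (hom_one lawG lawH phiM).
have [e e0 ballA] := phic W oW oneG A1.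
have dinvr g x y : dd (mulG x g) (mulG y g) = dd x y by have [] := binv g x y.
have imAU : phi @` (phi @^-1` W) `<=` U by move=> _ [x Wx <-]; exact: WU.
apply: filterS (stein _ Asym Asynd e e0) => z.
move=> /(thickening_set_pow_subset lawG dsym dinvr ballA) /(hom_set_pow lawG lawH phiM).
by move=> /(set_pow_subset imAU) /UV.
Qed.
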